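(* Let $\mathcal{G}$ be the graph on vertices $\{1,2,3,4,5,6\}$ with edges $\{1,2\},\{1,3\},\{2,3\},\{4,5\},\{4,6\},\{5,6\},\{1,4\},\{2,5\},\{3,6\}$, and let $|\mathcal{G}\rangle\in\mathcal{B}^6$ be the stabilizer state stabilized (with all signs $+1$) by the operators $\sigma^x_u\prod_{v:\{u,v\}\in E}\sigma^z_v$, $u=1,\dots,6$. Suppose $|\mathcal{G}\rangle$ is shared by four parties $A=\{1,4\}$, $B=\{3,6\}$, $C=\{2\}$, $D=\{5\}$. Then $|\mathcal{G}\rangle$ is irreducible: there is no decomposition in which $|\mathcal{G}\rangle$ is LCU-equivalent to $|\Psi'\rangle\otimes|\Psi''\rangle$ with $|\Psi'\rangle,|\Psi''\rangle$ four-party stabilizer states each consisting of at least one qubit (party $\alpha$ holding $k_\alpha$ qubits of $|\Psi'\rangle$ and $n_\alpha-k_\alpha$ of $|\Psi''\rangle$, $0\le k_\alpha\le n_\alpha$, $1\le\sum_\alpha k_\alpha\le 5$).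
   Context: $\sigma^x_u,\sigma^z_u$ denote the Pauli matrices acting on qubit $u$. The Clifford group $\mathcal{C}(k)$ is the set of unitaries $U$ on $k$ qubits mapping each tensor product of Pauli matrices and identities, under conjugation, to $\pm$ such a tensor product. A stabilizer state on $k$ qubits is a unit vector that is the unique (up to phase) common $\pm1$-eigenvector of an abelian group generated by $k$ independent commuting Pauli tensor products. Two multi-party stabilizer states are LCU-equivalent if one equals $\bigotimes_\alpha U_\alpha$ applied to the other (up to global phase), where $U_\alpha$ is a Clifford unitary acting on the qubits of party $\alpha$. *)

From HB Require Import structures.
From mathcomp Require Import all_boot all_order all_algebra all_field.
Set Implicit Arguments. Unset Strict Implicit. Unset Printing Implicit Defensive.
Import Order.TTheory GRing.Theory Num.Theory.
Local Open Scope ring_scope.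

(** Qubits are indexed by a finite type Q; computational basis states are
    bit assignments Q -> bool; a (possibly unnormalised) state is a function
    from basis states to C; an operator is its matrix (row, column). *)
Definition basis (Q : finType) := {ffun Q -> bool}.
Definition state (Q : finType) := basis Q -> algC.
Definition op (Q : finType) := basis Q -> basis Q -> algC.

Definition apply (Q : finType) (A : op Q) (v : state Q) : state Q :=
  fun x => \sum_(y : basis Q) A x y * v y.
Definition mulop (Q : finType) (A B : op Q) : op Q :=
  fun x z => \sum_(y : basis Q) A x y * B y z.
Definition adj (Q : finType) (A : op Q) : op Q := fun x y => (A y x)^*.
Definition idop (Q : finType) : op Q := fun x y => if x == y then 1 else 0.

Definition unit_vec (Q : finType) (v : state Q) : Prop :=
  \sum_(x : basis Q) `|v x| ^+ 2 = 1.
Definition unitary (Q : finType) (U : op Q) : Prop :=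
  (forall x y, mulop U (adj U) x y = idop x y) /\
  (forall x y, mulop (adj U) U x y = idop x y).

Inductive pauli := PI | PX | PY | PZ.
Definition pmat (p : pauli) (a b : bool) : algC :=
  match p with
  | PI => if a == b then 1 else 0
  | PX => if a == b then 0 else 1
  | PY => if a == b then 0 else (if a then 'i else - 'i)
  | PZ => if a == b then (if a then -1 else 1) else 0
  end.
Definition pstr (Q : finType) (P : Q -> pauli) : op Q :=
  fun x y => \prod_(q : Q) pmat (P q) (x q) (y q).
Definition sgn (s : bool) : algC := if s then -1 else 1.

Definition clifford (Q : finType) (U : op Q) : Prop :=
  unitary U /\
  forall P : Q -> pauli, exists (P' : Q -> pauli) (s : bool),
    forall x y, mulop (mulop U (pstr P)) (adj U) x y = sgn s * pstr P' x y.

(** Symplectic bits of a Pauli letter (Pauli string up to phase). *)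
Definition xbit (p : pauli) : bool := match p with PX | PY => true | _ => false end.
Definition zbit (p : pauli) : bool := match p with PZ | PY => true | _ => false end.
(** independence: no nonempty product of the generators is (proportional to)
    the identity. *)
Definition independent (Q : finType) k (g : 'I_k -> Q -> pauli) : Prop :=
  forall J : {set 'I_k}, J != set0 ->
    exists q : Q, (\big[addb/false]_(j in J) xbit (g j q)) ||
                  (\big[addb/false]_(j in J) zbit (g j q)).

Definition stabilizer_state (Q : finType) (psi : state Q) : Prop :=
  unit_vec psi /\
  exists (g : 'I_#|Q| -> Q -> pauli) (s : 'I_#|Q| -> bool),
    (forall i j x y, mulop (pstr (g i)) (pstr (g j)) x y =
                     mulop (pstr (g j)) (pstr (g i)) x y) /\
    independent g /\
    (forall i x, apply (pstr (g i)) psi x = sgn (s i) * psi x) /\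
    (forall phi : state Q,
       (forall i x, apply (pstr (g i)) phi x = sgn (s i) * phi x) ->
       exists c : algC, forall x, phi x = c * psi x).

Definition subQ (Q : finType) (S : {set Q}) : finType := {q : Q | q \in S}.
Definition restr (Q : finType) (S : {set Q}) (x : basis Q) : basis (subQ S) :=
  [ffun q : subQ S => x (val q)].

Definition prod_state (Q : finType) (S : {set Q}) (psi1 : state (subQ S))
    (psi2 : state (subQ (~: S))) : state Q :=
  fun x => psi1 (restr S x) * psi2 (restr (~: S) x).

Definition partQ (Q I : finType) (part : Q -> I) (a : I) : finType :=
  subQ [set q | part q == a].
Definition local_op (Q I : finType) (part : Q -> I)
    (U : forall a : I, op (partQ part a)) : op Q :=
  fun x y => \prod_(a : I) U a (restr _ x) (restr _ y).

Definition LCU_equiv (Q I : finType) (part : Q -> I) (psi phi : state Q) : Prop :=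
  exists U : forall a : I, op (partQ part a),
    (forall a, clifford (U a)) /\
    exists c : algC, `|c| = 1 /\
      forall x, apply (local_op U) psi x = c * phi x.

Definition reducible (Q I : finType) (part : Q -> I) (psi : state Q) : Prop :=
  exists S : {set Q}, S != set0 /\ S != setT /\
    exists (psi1 : state (subQ S)) (psi2 : state (subQ (~: S))),
      stabilizer_state psi1 /\ stabilizer_state psi2 /\
      LCU_equiv part psi (prod_state psi1 psi2).

(** The graph: vertices 1..6 are 'I_6 elements 0..5. *)
Definition edges6 : seq (nat * nat) :=
  [:: (1,2); (1,3); (2,3); (4,5); (4,6); (5,6); (1,4); (2,5); (3,6)]%N.
Definition adj6 (u v : 'I_6) : bool :=
  ((u.+1, v.+1) \in edges6) || ((v.+1, u.+1) \in edges6).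
Definition Kgen (u : 'I_6) : 'I_6 -> pauli :=
  fun v => if v == u then PX else if adj6 u v then PZ else PI.
(** Parties A = {1,4} -> 0, B = {3,6} -> 1, C = {2} -> 2, D = {5} -> 3. *)
Definition party6 (q : 'I_6) : 'I_4 :=
  match val q with
  | 0 | 3 => inord 0
  | 2 | 5 => inord 1
  | 1 => inord 2
  | _ => inord 3
  end%N.

From mathcomp Require Import all_boot all_order all_algebra all_field.
From mathcomp Require Import ring.
Set Implicit Arguments. Unset Strict Implicit. Unset Printing Implicit Defensive.
Import Order.TTheory GRing.Theory Num.Theory.
Local Open Scope ring_scope.

(* The invariant is the purity Tr(rho_T^2) of the reduced state on a set T of
   qubits that is a union of parties: it is unchanged by local unitaries and
   global phases, multiplicative on product states, and at least
   2^-min(|T|, |~T|) for a unit vector.  For the graph state the purity across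
   the parties P is 2^-E(P), E(P) the GF(2)-rank of the adjacency matrix of the
   cut.  For a product decomposition these values force one factor to be a
   four-qubit state with one qubit per party all of whose two-qubit reduced
   states have purity at most 1/4, which Rains' shadow inequality
   sum_T (-1)^|T| Tr(rho_T^2) >= 0 excludes: there is no absolutely maximally
   entangled state of four qubits. *)

Lemma exists_basis_neq (Q : finType) (x y : basis Q) : x != y -> exists q, x q != y q.
Proof.
move=> xy; apply/existsP; apply: contraR xy => /existsPn xy.
by apply/eqP/ffunP => q; apply/eqP/negPn.
Qed.

(** * Purity of reduced states *)

Section Purity.
Variable Q : finType.
Implicit Types (S T : {set Q}) (f g : state Q) (x y : basis Q).

Definition swap_on T x y : basis Q := [ffun q => if q \in T then y q else x q].

(* For a unit vector [f], [purity T f] is Tr(rho_T^2), rho_T the reduced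
   density matrix of [f] on the qubits [T]. *)
Definition purity T f : algC :=
  \sum_x \sum_y f x * f y * (f (swap_on T x y))^* * (f (swap_on T y x))^*.

Definition sqnorm f : algC := \sum_x `|f x| ^+ 2.

Lemma eq_purity T f g : f =1 g -> purity T f = purity T g.
Proof. by move=> fg; apply: eq_bigr => x _; apply: eq_bigr => y _; rewrite !fg. Qed.

Lemma purityC T f : purity (~: T) f = purity T f.
Proof.
rewrite /purity exchange_big; apply: eq_bigr => x _; apply: eq_bigr => y _.
have swapC x' y' : swap_on (~: T) x' y' = swap_on T y' x'.
  by apply/ffunP => q; rewrite !ffunE inE; case: (q \in T).
by rewrite !swapC; ring.
Qed.

Lemma purity0 f : purity set0 f = sqnorm f ^+ 2.
Proof.
have swap0 x y : swap_on set0 x y = x by apply/ffunP => q; rewrite ffunE inE.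
rewrite /purity /sqnorm expr2 mulr_suml; apply: eq_bigr => x _.
by rewrite mulr_sumr; apply: eq_bigr => y _; rewrite !swap0 !normCK; ring.
Qed.

Lemma purityT f : purity setT f = sqnorm f ^+ 2.
Proof. by rewrite -setC0 purityC purity0. Qed.

Lemma purityZ T f (c : algC) : `|c| = 1 -> purity T (fun x => c * f x) = purity T f.
Proof.
move=> c1; have cc : c * c^* = 1 by rewrite -normCK c1 expr1n.
apply: eq_bigr => x _; apply: eq_bigr => y _; rewrite !rmorphM /=.
transitivity ((c * c^*) ^+ 2 * (f x * f y * (f (swap_on T x y))^* * (f (swap_on T y x))^*)).
  by ring.
by rewrite cc expr1n mul1r.
Qed.

Definition glue S (a : basis (subQ S)) (b : basis (subQ (~: S))) : basis Q :=
  [ffun q => if @insub Q (fun q => q \in S) (subQ S) q is Some q' then a q'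
             else if @insub Q (fun q => q \in ~: S) (subQ (~: S)) q is Some q' then b q'
             else false].

Lemma restr_glue S a b : restr S (glue a b) = a.
Proof. by apply/ffunP => q; rewrite !ffunE valK. Qed.

Lemma restrC_glue S a b : restr (~: S) (glue a b) = b.
Proof.
apply/ffunP => q; rewrite !ffunE insubF ?valK //.
by have := valP q; rewrite inE => /negbTE.
Qed.

Lemma glue_restr S x : glue (restr S x) (restr (~: S) x) = x.
Proof.
apply/ffunP => q; rewrite !ffunE.
case: insubP => [q' _ <-|qS]; first by rewrite ffunE.
by case: insubP => [q' _ <-|]; [rewrite ffunE | rewrite inE qS].
Qed.

Lemma sum_glue S (F : basis Q -> algC) :
  \sum_x F x = \sum_(a : basis (subQ S)) \sum_(b : basis (subQ (~: S))) F (glue a b).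
Proof.
rewrite pair_bigA /=.
rewrite (reindex (fun p : basis (subQ S) * basis (subQ (~: S)) => glue p.1 p.2)) //=.
exists (fun x => (restr S x, restr (~: S) x)) => [[a b] _|x _] /=.
  by rewrite restr_glue restrC_glue.
by rewrite glue_restr.
Qed.

Lemma sum_restr_mul S (F : basis (subQ S) -> algC) (G : basis (subQ (~: S)) -> algC) :
  \sum_x F (restr S x) * G (restr (~: S) x) = (\sum_a F a) * (\sum_b G b).
Proof.
rewrite (sum_glue S) mulr_suml; apply: eq_bigr => a _; rewrite mulr_sumr.
by apply: eq_bigr => b _; rewrite restr_glue restrC_glue.
Qed.

Lemma swap_onE T x y : swap_on T x y = glue (restr T y) (restr (~: T) x).
Proof.
rewrite -[LHS](glue_restr T); congr glue; apply/ffunP => q; rewrite !ffunE.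
  by rewrite (valP q).
by have := valP q; rewrite inE => /negbTE ->.
Qed.

Lemma sqr_sum_le_card (K : finType) (r : K -> algC) : (forall k, r k \is Num.real) ->
  (\sum_k r k) ^+ 2 <= #|K|%:R * \sum_k r k ^+ 2.
Proof.
move=> rR.
have sq_ge0 : 0 <= \sum_i \sum_j (r i - r j) ^+ 2.
  by do 2!(apply: sumr_ge0 => ? _); apply: real_exprn_even_ge0; rewrite ?rpredB.
suff sqE : \sum_i \sum_j (r i - r j) ^+ 2 =
           2%:R * (#|K|%:R * \sum_k r k ^+ 2 - (\sum_k r k) ^+ 2).
  by move: sq_ge0; rewrite sqE pmulr_rge0 ?ltr0n // subr_ge0.
transitivity (\sum_i \sum_j (r i ^+ 2 + r j ^+ 2 - 2%:R * (r i * r j))).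
  by apply: eq_bigr => i _; apply: eq_bigr => j _; ring.
under eq_bigr => i _ do
  rewrite sumrB big_split /= sumr_const -!mulr_sumr -mulr_natl.
rewrite sumrB big_split /= sumr_const -!mulr_sumr -mulr_suml -mulr_natl.
by rewrite [#|_|]cardT -cardE sumrMnl -mulr_natl; ring.
Qed.

Lemma card_basis_subQ S : #|basis (subQ S)| = (2 ^ #|S|)%N.
Proof.
by rewrite card_ffun card_bool card_sig; congr (2 ^ _)%N; apply: eq_card => x; rewrite inE.
Qed.

Definition reduced T f (a a' : basis (subQ T)) : algC :=
  \sum_(b : basis (subQ (~: T))) f (glue a b) * (f (glue a' b))^*.
Arguments reduced : clear implicits.

Lemma purity_reducedE T f : purity T f = \sum_a \sum_a' `|reduced T f a a'| ^+ 2.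
Proof.
rewrite /purity (sum_glue T); apply: eq_bigr => a _.
under eq_bigr => b _ do rewrite (sum_glue T).
rewrite exchange_big; apply: eq_bigr => a' _.
rewrite normCK /reduced rmorph_sum mulr_suml; apply: eq_bigr => b _.
rewrite mulr_sumr; apply: eq_bigr => b' _.
by rewrite !swap_onE !restr_glue !restrC_glue !rmorphM /= conjCK; ring.
Qed.

(* Cauchy-Schwarz on the diagonal of the reduced density matrix, whose trace is [sqnorm f]. *)
Lemma purity_ge T f : sqnorm f ^+ 2 <= 2%:R ^+ #|T| * purity T f.
Proof.
have diagE a : reduced T f a a = \sum_b `|f (glue a b)| ^+ 2.
  by apply: eq_bigr => b _; rewrite normCK.
have diag_ge0 a : 0 <= reduced T f a a.
  by rewrite diagE sumr_ge0 // => b _; apply: exprn_ge0.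
have diag_le : \sum_a reduced T f a a ^+ 2 <= purity T f.
  rewrite purity_reducedE; apply: ler_sum => a _.
  rewrite (bigD1 a) //= ger0_norm // lerDl.
  by apply: sumr_ge0 => a' _; apply: exprn_ge0.
have traceE : \sum_a reduced T f a a = sqnorm f.
  by rewrite /sqnorm (sum_glue T); apply: eq_bigr => a _; rewrite diagE.
have := sqr_sum_le_card (fun a => ger0_real (diag_ge0 a)).
rewrite traceE card_basis_subQ natrX => /le_trans; apply.
by rewrite ler_wpM2l // exprn_ge0 // ler0n.
Qed.

Lemma unit_purity_ge T f : unit_vec f -> 1 <= 2%:R ^+ minn #|T| #|~: T| * purity T f.
Proof.
move=> unit_f; have ge S : 1 <= 2%:R ^+ #|S| * purity S f.
  by have := purity_ge S f; rewrite [sqnorm f]unit_f expr1n.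
case: leqP => _; first exact: ge.
by rewrite -purityC; apply: ge.
Qed.

End Purity.

Definition restr_set (Q : finType) (R T : {set Q}) : {set subQ R} :=
  [set q : subQ R | val q \in T].

Lemma restr_swap_on (Q : finType) (R T : {set Q}) (x y : basis Q) :
  restr R (swap_on T x y) = swap_on (restr_set R T) (restr R x) (restr R y).
Proof. by apply/ffunP => q; rewrite !ffunE inE. Qed.

Lemma purity_prod_state (Q : finType) (S T : {set Q})
    (psi1 : state (subQ S)) (psi2 : state (subQ (~: S))) :
  purity T (prod_state psi1 psi2) =
  purity (restr_set S T) psi1 * purity (restr_set (~: S) T) psi2.
Proof.
rewrite /purity /prod_state.
pose F1 a a' := psi1 a * psi1 a' * (psi1 (swap_on (restr_set S T) a a'))^* *
                (psi1 (swap_on (restr_set S T) a' a))^*.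
pose F2 b b' := psi2 b * psi2 b' * (psi2 (swap_on (restr_set (~: S) T) b b'))^* *
                (psi2 (swap_on (restr_set (~: S) T) b' b))^*.
transitivity (\sum_x \sum_y F1 (restr S x) (restr S y) * F2 (restr (~: S) x) (restr (~: S) y)).
  apply: eq_bigr => x _; apply: eq_bigr => y _.
  by rewrite /F1 /F2 !restr_swap_on !rmorphM /=; ring.
rewrite -sum_restr_mul; apply: eq_bigr => x _.
by rewrite sum_restr_mul mulr_suml.
Qed.

(** * Invariance under local unitaries *)

Definition orthonormal_cols (K : finType) (V : K -> K -> algC) :=
  forall a b, \sum_p (V p a)^* * V p b = (a == b)%:R.

Lemma orthonormal_cols_dot (K : finType) (V : K -> K -> algC) (f g : K -> algC) :
  orthonormal_cols V ->
  \sum_p (\sum_a V p a * f a) * (\sum_b V p b * g b)^* = \sum_p f p * (g p)^*.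
Proof.
move=> orthoV.
transitivity (\sum_p \sum_a \sum_b (V p b)^* * V p a * (f a * (g b)^*)).
  apply: eq_bigr => p _; rewrite rmorph_sum mulr_suml; apply: eq_bigr => a _.
  by rewrite mulr_sumr; apply: eq_bigr => b _; rewrite rmorphM /=; ring.
rewrite exchange_big; apply: eq_bigr => a _; rewrite exchange_big /=.
rewrite (bigD1 a) //= [X in _ + X]big1 ?addr0 => [|b ba].
  by rewrite -mulr_suml orthoV eqxx mul1r.
by rewrite -mulr_suml orthoV (negbTE ba) mul0r.
Qed.

Lemma unitary_orthonormal_cols (Q : finType) (U : op Q) : unitary U -> orthonormal_cols U.
Proof. by case=> _ adjUU a b; have := adjUU a b; rewrite /mulop /adj /idop => ->; case: eqP. Qed.

Section CutLocal.
Variable Q : finType.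
Implicit Types (T : {set Q}) (f : state Q) (V : op Q).

(* Holds when [V] is a tensor product of an operator on [T] and one on [~: T]. *)
Definition cut_local V T := forall x x' y y',
  V x x' * V y y' = V (swap_on T x y) (swap_on T x' y') * V (swap_on T y x) (swap_on T y' x').

Definition swap_pair T (p : basis Q * basis Q) := (swap_on T p.1 p.2, swap_on T p.2 p.1).
Definition pair_state f (p : basis Q * basis Q) := f p.1 * f p.2.
Definition pair_op V (p p' : basis Q * basis Q) := V p.1 p'.1 * V p.2 p'.2.

Lemma swap_pairK T : involutive (swap_pair T).
Proof.
by case=> x y; congr pair; apply/ffunP => q; rewrite !ffunE; case: (q \in T).
Qed.

Lemma purity_pairE T f :
  purity T f = \sum_p pair_state f p * (pair_state f (swap_pair T p))^*.
Proof.
rewrite /purity pair_bigA /=; apply: eq_bigr => -[x y] _.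
by rewrite /pair_state /= rmorphM /=; ring.
Qed.

Lemma pair_state_apply V f p :
  pair_state (apply V f) p = \sum_p' pair_op V p p' * pair_state f p'.
Proof.
rewrite /pair_state /apply mulr_suml; under eq_bigr => x' _ do rewrite mulr_sumr.
rewrite (pair_bigA _ (fun x' y' => V p.1 x' * f x' * (V p.2 y' * f y'))) /=.
by apply: eq_bigr => -[x' y'] _; rewrite /pair_op /=; ring.
Qed.

Lemma orthonormal_cols_pair V : orthonormal_cols V -> orthonormal_cols (pair_op V).
Proof.
move=> orthoV [a1 a2] [b1 b2].
rewrite -(pair_bigA _ (fun x y => (V x a1 * V y a2)^* * (V x b1 * V y b2))) /=.
transitivity ((\sum_x (V x a1)^* * V x b1) * (\sum_y (V y a2)^* * V y b2)).
  rewrite mulr_suml; apply: eq_bigr => x _; rewrite mulr_sumr; apply: eq_bigr => y _.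
  by rewrite /pair_op rmorphM /=; ring.
by rewrite !orthoV xpair_eqE; case: (a1 == b1); case: (a2 == b2); rewrite ?mul1r ?mul0r.
Qed.

Lemma purity_apply T V f :
  orthonormal_cols V -> cut_local V T -> purity T (apply V f) = purity T f.
Proof.
move=> orthoV localV.
have pair_swap_apply p : pair_state (apply V f) (swap_pair T p) =
    \sum_p' pair_op V p p' * pair_state f (swap_pair T p').
  rewrite pair_state_apply (reindex_inj (can_inj (swap_pairK T))) /=.
  by apply: eq_bigr => -[x' y'] _; rewrite /pair_op -localV.
rewrite !purity_pairE.
under eq_bigr => p _ do rewrite pair_swap_apply pair_state_apply.
exact: orthonormal_cols_dot (orthonormal_cols_pair orthoV).
Qed.

End CutLocal.

Section Parties.
Variables (Q I : finType) (part : Q -> I).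

Definition parties (P : {set I}) : {set Q} := [set q | part q \in P].

Let party_set a := [set q | part q == a].
Let supported a : pred (basis Q) := fun x => [forall q, (part q != a) ==> ~~ x q].
Let extend a (w : basis (partQ part a)) : basis Q :=
  [ffun q => if @insub Q (fun q => q \in party_set a) (partQ part a) q is Some q'
             then w q' else false].

Lemma sum_partQ a (F : basis (partQ part a) -> algC) :
  \sum_w F w = \sum_(x | supported a x) F (restr (party_set a) x).
Proof.
rewrite (reindex_onto (@extend a) (restr (party_set a))) /=.
  apply: eq_big => w.
    symmetry; apply/andP; split.
      apply/forallP => q; apply/implyP => nq; rewrite ffunE insubF //.
      by rewrite inE (negbTE nq).
    by apply/eqP/ffunP => q; rewrite !ffunE valK.
  by move=> _; congr F; apply/ffunP => q; rewrite !ffunE valK.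
move=> x /forallP supp_x; apply/ffunP => q; rewrite !ffunE.
case: insubP => [q' _ <-|]; first by rewrite ffunE.
by rewrite inE => nq; have /implyP/(_ nq)/negbTE := supp_x q.
Qed.

Lemma sum_prod_partQ (F : forall a : I, basis (partQ part a) -> algC) :
  \sum_(x : basis Q) \prod_a F a (restr (party_set a) x) =
  \prod_a \sum_(w : basis (partQ part a)) F a w.
Proof.
under [RHS]eq_bigr => a _ do rewrite sum_partQ.
rewrite (bigA_distr_big_dep supported (fun a x => F a (restr (party_set a) x))).
pose split_parts (x : basis Q) : {ffun I -> basis Q} :=
  [ffun a => [ffun q => (part q == a) && x q]].
pose join_parts (g : {ffun I -> basis Q}) : basis Q := [ffun q => g (part q) q].
rewrite (reindex_onto split_parts join_parts) /=; last first.
  move=> g /familyP supp_g; apply/ffunP => a; apply/ffunP => q; rewrite !ffunE.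
  case: eqP => [<-|/eqP nq] //.
  by have /forallP/(_ q)/implyP/(_ nq)/negbTE := supp_g a.
apply: eq_big => [x|x _].
  symmetry; apply/andP; split.
    by apply/familyP => a; apply/forallP => q; rewrite !ffunE; apply/implyP => /negbTE ->.
  by apply/eqP/ffunP => q; rewrite !ffunE eqxx.
apply: eq_bigr => a _; congr F; apply/ffunP => q; rewrite !ffunE.
by have := valP q; rewrite inE => ->.
Qed.

Lemma local_op_orthonormal_cols (U : forall a : I, op (partQ part a)) :
  (forall a, orthonormal_cols (U a)) -> orthonormal_cols (local_op U).
Proof.
move=> orthoU x z; rewrite /local_op.
under eq_bigr => X _ do rewrite rmorph_prod -big_split /=.
rewrite (sum_prod_partQ (fun a w =>
  (U a w (restr (party_set a) x))^* * U a w (restr (party_set a) z))).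
under eq_bigr => a _ do rewrite orthoU.
case: eqP => [->|/eqP nxz]; first by apply: big1 => a _; rewrite eqxx.
have [q nq] := exists_basis_neq nxz.
rewrite (bigD1 (part q)) //=.
suff -> : (restr (party_set (part q)) x == restr (party_set (part q)) z) = false.
  by rewrite mul0r.
apply/negbTE; apply: contra nq => /eqP/ffunP.
have q_in : q \in party_set (part q) by rewrite inE.
by move/(_ (Sub q q_in)); rewrite !ffunE /= => ->.
Qed.

Lemma restr_party_swap_on (P : {set I}) a (x y : basis Q) :
  restr (party_set a) (swap_on (parties P) x y) =
  if a \in P then restr (party_set a) y else restr (party_set a) x.
Proof.
have part_a (q : partQ part a) : part (val q) = a by have := valP q; rewrite inE => /eqP.
by case: ifP => aP; apply/ffunP => q; rewrite !ffunE inE part_a aP.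
Qed.

Lemma local_op_cut_local (U : forall a : I, op (partQ part a)) P :
  cut_local (local_op U) (parties P).
Proof.
move=> x x' y y'; rewrite /local_op -!big_split /=; apply: eq_bigr => a _.
by rewrite !restr_party_swap_on; case: (a \in P); rewrite // mulrC.
Qed.

Lemma purity_LCU_equiv P (psi phi : state Q) :
  LCU_equiv part psi phi -> purity (parties P) psi = purity (parties P) phi.
Proof.
case=> U [cliffU [c [c1 Upsi]]].
rewrite -(purityZ _ phi c1) -(eq_purity _ Upsi) purity_apply //.
  by apply: local_op_orthonormal_cols => a; apply: unitary_orthonormal_cols (cliffU a).1.
exact: local_op_cut_local.
Qed.

End Parties.

(** * The shadow inequality *)

Lemma sum_indicator (K : finType) (v : K) (g : K -> algC) : \sum_y (y == v)%:R * g y = g v.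
Proof.
rewrite (bigD1 v) //= eqxx mul1r big1 ?addr0 // => y yv.
by rewrite (negbTE yv) mul0r.
Qed.

Section Shadow.
Variable Q : finType.
Implicit Types (T : {set Q}) (f : state Q) (x y u v : basis Q).

Lemma sum_subsets_prod (a b : Q -> algC) :
  \sum_(T : {set Q}) \prod_q (if q \in T then a q else b q) = \prod_q (b q + a q).
Proof.
transitivity (\prod_q \sum_(c : bool) (if c then a q else b q)); last first.
  by apply: eq_bigr => q _; rewrite big_bool /= addrC.
rewrite bigA_distr_bigA /= (reindex (fun c : {ffun Q -> bool} => [set q | c q])) /=.
  by apply: eq_bigr => c _; apply: eq_bigr => q _; rewrite inE.
exists (fun T : {set Q} => [ffun q => q \in T]) => [c _|T _].
  by apply/ffunP => q; rewrite !ffunE inE.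
by apply/setP => q; rewrite !inE ffunE.
Qed.

Lemma indicator_prod x y : ((x == y)%:R : algC) = \prod_q (x q == y q)%:R.
Proof.
case: eqP => [->|/eqP xy]; first by rewrite big1 // => q _; rewrite eqxx.
have [q xyq] := exists_basis_neq xy.
by rewrite (bigD1 q) //= (negbTE xyq) mul0r.
Qed.

Definition swap_weight T x y u v : algC :=
  \prod_q (if q \in T then (u q == y q)%:R * (v q == x q)%:R
           else (u q == x q)%:R * (v q == y q)%:R).

Lemma purity_weightE T f : purity T f =
  \sum_x \sum_y \sum_u \sum_v f x * f y * (f u)^* * (f v)^* * swap_weight T x y u v.
Proof.
apply: eq_bigr => x _; apply: eq_bigr => y _.
have weightE u v :
    swap_weight T x y u v = (u == swap_on T x y)%:R * (v == swap_on T y x)%:R.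
  rewrite !indicator_prod -big_split; apply: eq_bigr => q _.
  by rewrite !ffunE; case: (q \in T).
transitivity (\sum_u (u == swap_on T x y)%:R *
    \sum_v (v == swap_on T y x)%:R * (f x * f y * (f u)^* * (f v)^*)).
  by rewrite !sum_indicator; ring.
apply: eq_bigr => u _; rewrite mulr_sumr; apply: eq_bigr => v _.
by rewrite weightE; ring.
Qed.

Definition flip_all x : basis Q := [ffun q => ~~ x q].
Definition parity_sign x : algC := \prod_q sgn (x q).

Lemma signed_sum_swap_weight x y u v :
  \sum_(T : {set Q}) (-1) ^+ #|T| * swap_weight T x y u v =
  (y == flip_all x)%:R * (v == flip_all u)%:R * (parity_sign x * parity_sign u).
Proof.
have signE T : (-1) ^+ #|T| = \prod_q (if q \in T then -1 else 1) :> algC.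
  by rewrite -big_mkcond /= prodr_const.
transitivity (\sum_(T : {set Q}) \prod_q (if q \in T
    then - ((u q == y q)%:R * (v q == x q)%:R) else (u q == x q)%:R * (v q == y q)%:R)
    : algC).
  apply: eq_bigr => T _; rewrite signE -big_split; apply: eq_bigr => q _ /=.
  by case: (q \in T); rewrite ?mulN1r ?mul1r.
rewrite sum_subsets_prod.
transitivity (\prod_q ((y q == ~~ x q)%:R * (v q == ~~ u q)%:R * (sgn (x q) * sgn (u q)))
    : algC).
  by apply: eq_bigr => q _; case: (x q); case: (y q); case: (u q); case: (v q);
     rewrite /sgn /=; ring.
rewrite !big_split /= !indicator_prod.
by congr (_ * _ * _); apply: eq_bigr => q _; rewrite ffunE.
Qed.

Lemma shadow_sumE f : \sum_(T : {set Q}) (-1) ^+ #|T| * purity T f =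
  `|\sum_x parity_sign x * f x * f (flip_all x)| ^+ 2.
Proof.
transitivity (\sum_x \sum_y \sum_u \sum_v f x * f y * (f u)^* * (f v)^* *
    \sum_(T : {set Q}) (-1) ^+ #|T| * swap_weight T x y u v).
  under eq_bigr => T _ do rewrite purity_weightE mulr_sumr.
  rewrite exchange_big; apply: eq_bigr => x _.
  under eq_bigr => T _ do rewrite mulr_sumr.
  rewrite exchange_big; apply: eq_bigr => y _.
  under eq_bigr => T _ do rewrite mulr_sumr.
  rewrite exchange_big; apply: eq_bigr => u _.
  under eq_bigr => T _ do rewrite mulr_sumr.
  rewrite exchange_big; apply: eq_bigr => v _.
  by rewrite mulr_sumr; apply: eq_bigr => T _; ring.
have sign_conj z : (parity_sign z)^* = parity_sign z.
  by rewrite rmorph_prod; apply: eq_bigr => q _; case: (z q); rewrite /sgn ?rmorphN rmorph1.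
rewrite normCK rmorph_sum mulr_suml; apply: eq_bigr => x _; rewrite mulr_sumr.
transitivity (\sum_y (y == flip_all x)%:R * \sum_u \sum_v (v == flip_all u)%:R *
    (parity_sign x * f x * f y * (parity_sign u * f u * f v)^*)).
  apply: eq_bigr => y _; rewrite mulr_sumr; apply: eq_bigr => u _.
  rewrite mulr_sumr; apply: eq_bigr => v _.
  by rewrite signed_sum_swap_weight !rmorphM /= sign_conj; ring.
by rewrite sum_indicator; apply: eq_bigr => u _; rewrite sum_indicator.
Qed.

Lemma shadow_ineq f : 0 <= \sum_(T : {set Q}) (-1) ^+ #|T| * purity T f.
Proof. by rewrite shadow_sumE exprn_ge0. Qed.

End Shadow.

Lemma sum_card_subsets (K : finType) (h : nat -> algC) :
  \sum_(T : {set K}) h #|T| = \sum_(k < #|K|.+1) 'C(#|K|, k)%:R * h k.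
Proof.
transitivity (\sum_(T : {set K}) \sum_(k < #|K|.+1) (#|T| == k)%:R * h k).
  apply: eq_bigr => T _; have cardT : (#|T| < #|K|.+1)%N by rewrite ltnS max_card.
  rewrite (bigD1 (Ordinal cardT)) //= eqxx mul1r big1 ?addr0 // => k.
  by rewrite -val_eqE /= eq_sym => /negbTE ->; rewrite mul0r.
rewrite exchange_big; apply: eq_bigr => k _; rewrite -mulr_suml -card_draws.
rewrite -sum1_card natr_sum [X in _ = X * _]big_mkcond /=.
by congr (_ * _); apply: eq_bigr => T _; rewrite inE; case: (_ == _).
Qed.

Definition shadow_bound4 (k : nat) : algC :=
  match k with 1 | 3 => - 2%:R^-1 | 2 => 4%:R^-1 | _ => 1 end.

Lemma no_AME4 (K : finType) (psi : state K) : #|K| = 4 -> unit_vec psi ->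
  ~ (forall T : {set K}, #|T| = 2 -> purity T psi <= 4%:R^-1).
Proof.
move=> cardK unit_psi ame.
have term_le (T : {set K}) : (-1) ^+ #|T| * purity T psi <= shadow_bound4 #|T|.
  have cardTC : #|~: T| = (4 - #|T|)%N by rewrite cardsCs setCK cardK.
  have := unit_purity_ge T unit_psi; rewrite cardTC.
  have : (#|T| <= 4)%N by rewrite -[4%N]cardK max_card.
  case cardT: #|T| => [|[|[|[|[|//]]]]] _ /= ge.
  - move/eqP: cardT; rewrite cards_eq0 => /eqP->.
    by rewrite purity0 [sqnorm _]unit_psi !expr1n mul1r.
  - by rewrite expr1 mulN1r lerN2 -[2%:R^-1]mulr1 ler_pdivrMl ?ltr0n.
  - by rewrite sqrrN expr1n mul1r ame.
  - by rewrite exprS sqrrN expr1n mulr1 mulN1r lerN2 -[2%:R^-1]mulr1 ler_pdivrMl ?ltr0n.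
  have -> : T = setT by apply/eqP; rewrite eqEcard subsetT cardsT cardK cardT.
  by rewrite purityT [sqnorm _]unit_psi !expr1n mulr1 -signr_odd expr0.
have := le_trans (shadow_ineq psi) (ler_sum _ (fun T _ => term_le T)).
rewrite sum_card_subsets cardK.
have -> : \sum_(k < 5) 'C(4, k)%:R * shadow_bound4 k = - 2%:R^-1.
  rewrite !big_ord_recl big_ord0 /= /bump /= !addn0 !add1n bin0 bin1 binn.
  by rewrite (_ : 'C(4, 2) = 6%N) // (_ : 'C(4, 3) = 4%N) //; field.
by rewrite oppr_ge0 invr_le0 lern0.
Qed.

(** * The graph state *)

Lemma sgnD a b : sgn (a (+) b) = sgn a * sgn b.
Proof. by case: a; case: b; rewrite /sgn /= ?mulN1r ?mul1r ?opprK. Qed.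

Lemma sgn_sum (I : finType) (P : pred I) (g : I -> bool) :
  sgn (\big[addb/false]_(i | P i) g i) = \prod_(i | P i) sgn (g i).
Proof. exact: (big_morph sgn sgnD). Qed.

Lemma sgnK b : sgn b * sgn b = 1.
Proof. by case: b; rewrite /sgn ?mulN1r ?opprK ?mul1r. Qed.

Definition flip (Q : finType) (u : Q) (x : basis Q) : basis Q :=
  [ffun q => if q == u then ~~ x q else x q].

Lemma flip_invariant_const (Q : finType) (H : basis Q -> algC) :
  (forall u x, H (flip u x) = H x) -> forall x, H x = H [ffun=> false].
Proof.
move=> Hflip x; move Hn : #|[set q | x q]| => n; elim: n x Hn => [|n IHn] x Hn.
  congr H; apply/ffunP => q; rewrite ffunE; apply/negbTE/negP => xq.
  by move/eqP: Hn; rewrite cards_eq0 => /eqP/setP/(_ q); rewrite !inE xq.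
have /set0Pn[u] : [set q | x q] != set0 by rewrite -card_gt0 Hn.
rewrite inE => xu; rewrite -(Hflip u) IHn //.
have -> : [set q | flip u x q] = [set q | x q] :\ u.
  by apply/setP => q; rewrite !inE !ffunE; case: eqP => [->|]; rewrite ?xu.
by move: Hn; rewrite (cardsD1 u) inE xu add1n => -[].
Qed.

Definition neighbour_parity (u : 'I_6) (x : basis 'I_6) : bool :=
  \big[addb/false]_(q : 'I_6) ((q != u) && adj6 u q && x q).

Lemma pstr_Kgen u x y :
  pstr (Kgen u) x y = if y == flip u x then sgn (neighbour_parity u x) else 0.
Proof.
rewrite /pstr /neighbour_parity sgn_sum; case: eqP => [->|/eqP yx].
  apply: eq_bigr => q _; rewrite /Kgen ffunE.
  case: (q =P u) => [->|_] /=; first by case: (x u).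
  by case: (adj6 u q) => //=; case: (x q).
have [q yxq] := exists_basis_neq yx.
rewrite (bigD1 q) //= [pmat _ _ _](_ : _ = 0) ?mul0r //.
move: yxq; rewrite /Kgen ffunE.
case: (q =P u) => [->|_] /=; first by case: (x u); case: (y u).
by case: (adj6 u q) => /=; case: (x q); case: (y q).
Qed.

Lemma apply_Kgen u (G : state 'I_6) x :
  apply (pstr (Kgen u)) G x = sgn (neighbour_parity u x) * G (flip u x).
Proof.
rewrite /apply (bigD1 (flip u x)) //= pstr_Kgen eqxx big1 ?addr0 // => y yx.
by rewrite pstr_Kgen (negbTE yx) mul0r.
Qed.

(* [vi] is the vertex [i] of the graph, i.e. the qubit [i - 1] of ['I_6]. *)
Definition v1 : 'I_6 := @Ordinal 6 0 isT.
Definition v2 : 'I_6 := @Ordinal 6 1 isT.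
Definition v3 : 'I_6 := @Ordinal 6 2 isT.
Definition v4 : 'I_6 := @Ordinal 6 3 isT.
Definition v5 : 'I_6 := @Ordinal 6 4 isT.
Definition v6 : 'I_6 := @Ordinal 6 5 isT.

Lemma big_addb_I6 (g : 'I_6 -> bool) :
  \big[addb/false]_(q : 'I_6) g q =
  g v1 (+) (g v2 (+) (g v3 (+) (g v4 (+) (g v5 (+) (g v6 (+) false))))).
Proof.
rewrite !big_ord_recl big_ord0.
by do 6 (congr addb; first by congr g; apply: val_inj).
Qed.

(* The number of edges of the graph inside the support of [l], mod 2. *)
Definition edge_parity_seq (l : seq bool) : bool :=
  let n := nth false l in
  (n 0 && n 1) (+) (n 0 && n 2) (+) (n 1 && n 2) (+) (n 3 && n 4) (+)
  (n 3 && n 5) (+) (n 4 && n 5) (+) (n 0 && n 3) (+) (n 1 && n 4) (+) (n 2 && n 5).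

Definition edge_parity (x : basis 'I_6) : bool :=
  edge_parity_seq [:: x v1; x v2; x v3; x v4; x v5; x v6].

Lemma edge_parity_flip u x : edge_parity x = neighbour_parity u x (+) edge_parity (flip u x).
Proof.
rewrite /neighbour_parity big_addb_I6 /edge_parity !ffunE.
case: u => [[|[|[|[|[|[|//]]]]]] ?]; rewrite /adj6 /=;
  by case: (x v1); case: (x v2); case: (x v3); case: (x v4); case: (x v5); case: (x v6).
Qed.

Lemma graph_stateE (G : state 'I_6) : (forall u x, apply (pstr (Kgen u)) G x = G x) ->
  forall x, G x = sgn (edge_parity x) * G [ffun=> false].
Proof.
move=> stabG x; pose H y := sgn (edge_parity y) * G y.
have H_flip u y : H (flip u y) = H y.
  rewrite /H -[in RHS](stabG u y) apply_Kgen [in RHS](edge_parity_flip u y) sgnD.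
  by rewrite mulrCA !mulrA sgnK mul1r.
have := flip_invariant_const H_flip x; rewrite /H /edge_parity !ffunE /= mul1r => <-.
by rewrite mulrA sgnK mul1r.
Qed.

Fixpoint all_bits (n : nat) : seq (seq bool) :=
  if n is n'.+1 then [seq b :: l | b <- [:: false; true], l <- all_bits n'] else [:: [::]].

Definition of_bits (l : seq bool) : basis 'I_6 := [ffun q : 'I_6 => nth false l q].

Lemma of_bits_eta (x : basis 'I_6) : x = of_bits [:: x v1; x v2; x v3; x v4; x v5; x v6].
Proof.
apply/ffunP => q; rewrite ffunE.
by case: q => [[|[|[|[|[|[|//]]]]]] ?] /=; congr (x _); apply: val_inj.
Qed.

Lemma sum_basis6 (F : basis 'I_6 -> algC) : \sum_x F x = \sum_(l <- all_bits 6) F (of_bits l).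
Proof.
rewrite -(big_map of_bits predT F); apply/perm_big/uniq_perm; first exact: index_enum_uniq.
  rewrite map_inj_in_uniq // => l l' l_bits l'_bits /ffunP eq_ll'.
  have size6 : all (fun l : seq bool => size l == 6%N) (all_bits 6) by [].
  move: (allP size6 l l_bits) (allP size6 l' l'_bits) => /eqP sl /eqP sl'.
  apply: (@eq_from_nth _ false); rewrite ?sl ?sl' // => i lt_i6.
  by have := eq_ll' (Ordinal lt_i6); rewrite !ffunE.
move=> x; rewrite mem_index_enum; symmetry; apply/mapP.
exists [:: x v1; x v2; x v3; x v4; x v5; x v6]; last exact: of_bits_eta.
by case: (x v1); case: (x v2); case: (x v3); case: (x v4); case: (x v5); case: (x v6).
Qed.

Lemma edge_parity_of_bits l : edge_parity (of_bits l) = edge_parity_seq l.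
Proof. by rewrite /edge_parity !ffunE. Qed.

Definition party_index (k : nat) : nat :=
  match k with 0 | 3 => 0 | 2 | 5 => 1 | 1 => 2 | _ => 3 end.

Lemma party_indexE (q : 'I_6) : party6 q = inord (party_index q).
Proof. by case: q => [[|[|[|[|[|[|//]]]]]] ?]. Qed.

Definition swap_bits (p l m : seq bool) : seq bool :=
  [seq if nth false p (party_index k) then nth false m k else nth false l k | k <- iota 0 6].

Definition party_bits (P : {set 'I_4}) : seq bool :=
  [:: inord 0 \in P; inord 1 \in P; inord 2 \in P; inord 3 \in P].

Lemma swap_on_of_bits P l m :
  swap_on (parties party6 P) (of_bits l) (of_bits m) = of_bits (swap_bits (party_bits P) l m).
Proof.
apply/ffunP => q; rewrite !ffunE inE (nth_map 0%N) ?size_iota // nth_iota // add0n.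
by rewrite party_indexE; case: q => [[|[|[|[|[|[|//]]]]]] ?].
Qed.

(* [ent_bits a b c d] is the GF(2)-rank of the adjacency matrix between the
   qubits of the parties selected by [a b c d] (in the order A, B, C, D) and
   the other qubits; the graph state has purity [2 ^- ent_bits a b c d] across
   that cut. *)
Definition ent_bits (a b c d : bool) : nat :=
  match a, b, c, d with
  | false, false, false, false => 0
  | true, false, false, false => 2
  | false, true, false, false => 2
  | false, false, true, false => 1
  | false, false, false, true => 1
  | true, true, false, false => 2
  | true, false, true, false => 3
  | true, false, false, true => 3
  | false, true, true, false => 3
  | false, true, false, true => 3
  | false, false, true, true => 2
  | true, true, true, false => 1
  | true, true, false, true => 1
  | true, false, true, true => 2
  | false, true, true, true => 2
  | true, true, true, true => 0
  end.

Definition entanglement (P : {set 'I_4}) : nat :=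
  ent_bits (inord 0 \in P) (inord 1 \in P) (inord 2 \in P) (inord 3 \in P).

Definition sign_count (p : seq bool) : int :=
  \sum_(l <- all_bits 6) \sum_(m <- all_bits 6)
    (-1) ^+ (edge_parity_seq l (+) edge_parity_seq m (+)
             edge_parity_seq (swap_bits p l m) (+) edge_parity_seq (swap_bits p m l)).

Lemma sign_countE a b c d : sign_count [:: a; b; c; d] = (2 ^ (12 - ent_bits a b c d))%N%:Z.
Proof. by case: a; case: b; case: c; case: d; rewrite /sign_count unlock; vm_compute. Qed.

Lemma sgnE b : sgn b = (-1) ^+ b.
Proof. by case: b. Qed.

Lemma purity_graph_state (G : state 'I_6) : unit_vec G ->
  (forall u x, apply (pstr (Kgen u)) G x = G x) ->
  forall P, purity (parties party6 P) G = (2%:R ^+ entanglement P)^-1.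
Proof.
move=> unitG stabG P; pose g0 := G [ffun=> false].
have Gx x : G x = sgn (edge_parity x) * g0 := graph_stateE stabG x.
have sgn_conj b : (sgn b)^* = sgn b by case: b; rewrite /sgn ?rmorphN rmorph1.
have normg0 : g0 * g0^* = 64%:R^-1.
  have : 64%:R * (g0 * g0^*) = 1.
    rewrite -[RHS]unitG /unit_vec -normCK.
    have sgn_norm b : `|sgn b| = 1 by case: b; rewrite /sgn ?normrN normr1.
    under eq_bigr => x _ do rewrite Gx normrM sgn_norm mul1r.
    by rewrite sumr_const card_ffun card_bool card_ord mulr_natl.
  have nz64 : 64%:R != 0 :> algC by rewrite pnatr_eq0.
  by move=> h; apply: (mulfI nz64); rewrite h mulfV.
have countE : \sum_x \sum_y sgn (edge_parity x) * sgn (edge_parity y) *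
    sgn (edge_parity (swap_on (parties party6 P) x y)) *
    sgn (edge_parity (swap_on (parties party6 P) y x)) = (sign_count (party_bits P))%:~R.
  rewrite /sign_count sum_basis6 rmorph_sum; apply: eq_bigr => l _.
  rewrite sum_basis6 rmorph_sum; apply: eq_bigr => m _.
  by rewrite !swap_on_of_bits !edge_parity_of_bits -!sgnD sgnE rmorphXn rmorphN1.
have purityE : purity (parties party6 P) G = (g0 * g0^*) ^+ 2 * (sign_count (party_bits P))%:~R.
  rewrite -countE mulr_sumr; apply: eq_bigr => x _; rewrite mulr_sumr; apply: eq_bigr => y _.
  by rewrite !Gx !rmorphM /= !sgn_conj; ring.
have le_e12 : (entanglement P <= 12)%N.
  by rewrite /entanglement; case: (inord 0 \in P); case: (inord 1 \in P);
     case: (inord 2 \in P); case: (inord 3 \in P).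
rewrite purityE normg0 /party_bits sign_countE -/(entanglement P).
move: (entanglement P) le_e12 => e le_e12.
have -> : (64%:R^-1 : algC) ^+ 2 = (2%:R ^+ (12 - e) * 2%:R ^+ e)^-1.
  by rewrite -exprD subnK // exprVn -!natrX.
by rewrite -pmulrn natrX invfM mulrC mulrA mulfV ?mul1r // expf_neq0 // pnatr_eq0.
Qed.

(** * Cuts of the six qubits *)

Lemma card_subQ (Q : finType) (R : {set Q}) : #|subQ R| = #|R|.
Proof. by rewrite card_sig; apply: eq_card => x; rewrite inE. Qed.

Lemma card_restr_set (Q : finType) (R X : {set Q}) : #|restr_set R X| = #|R :&: X|.
Proof.
rewrite -(card_imset _ val_inj); apply: eq_card => x; rewrite !inE.
apply/imsetP/andP => [[q]|[xR xX]]; first by rewrite inE => qX ->; split => //; apply: valP.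
by exists (Sub x xR); rewrite ?inE.
Qed.

Definition mincut (Q : finType) (R X : {set Q}) : nat := minn #|R :&: X| #|R :\: X|.

Lemma unit_purity_restr_ge (Q : finType) (R X : {set Q}) (psi : state (subQ R)) :
  unit_vec psi -> 1 <= 2%:R ^+ mincut R X * purity (restr_set R X) psi.
Proof.
move=> /(unit_purity_ge (restr_set R X)).
have -> : ~: restr_set R X = restr_set R (~: X) by apply/setP => q; rewrite !inE.
by rewrite /mincut !card_restr_set setDE.
Qed.

Lemma two_exp_gt0 n : 0 < (2%:R : algC) ^+ n.
Proof. by rewrite exprn_gt0 // ltr0n. Qed.

Lemma leq_of_purity_prod (E m1 m2 : nat) (p1 p2 : algC) :
  p1 * p2 = (2%:R ^+ E)^-1 -> 1 <= 2%:R ^+ m1 * p1 -> 1 <= 2%:R ^+ m2 * p2 ->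
  (E <= m1 + m2)%N.
Proof.
move=> prodE ge1 ge2.
have : 1 * 1 <= (2%:R ^+ m1 * p1) * (2%:R ^+ m2 * p2) by apply: ler_pM.
have -> : (2%:R ^+ m1 * p1) * (2%:R ^+ m2 * p2) = 2%:R ^+ (m1 + m2) / 2%:R ^+ E.
  by rewrite exprD -prodE; ring.
by rewrite mul1r ler_pdivlMr ?two_exp_gt0 // mul1r -!natrX ler_nat leq_exp2l.
Qed.

Lemma purity_le_of_prod (E m k : nat) (p p' : algC) :
  p' * p = (2%:R ^+ E)^-1 -> 1 <= 2%:R ^+ m * p' -> (m + k <= E)%N -> p <= (2%:R ^+ k)^-1.
Proof.
move=> prodE ge1 le_mkE.
have p'_gt0 : 0 < p' by move: (lt_le_trans ltr01 ge1); rewrite pmulr_rgt0 ?two_exp_gt0.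
have -> : p = (2%:R ^+ E)^-1 / p' by rewrite -prodE [p' * p]mulrC mulfK // gt_eqF.
rewrite ler_pdivrMr //; apply: (@le_trans _ _ (2%:R ^+ (m + k))^-1).
  by rewrite lef_pV2 ?posrE ?two_exp_gt0 // -!natrX ler_nat leq_exp2l.
rewrite exprD invfM mulrC ler_wpM2l ?invr_ge0 ?exprn_ge0 ?ler0n //.
by rewrite -[_^-1]mulr1 ler_pdivrMl ?two_exp_gt0.
Qed.

Lemma card_I6 (A : {set 'I_6}) :
  #|A| = ((v1 \in A) + (v2 \in A) + (v3 \in A) + (v4 \in A) + (v5 \in A) + (v6 \in A))%N.
Proof.
rewrite -sum1_card big_mkcond /= !big_ord_recl big_ord0 addn0 !addnA.
by congr (_ + _ + _ + _ + _ + _); congr (nat_of_bool (_ \in A)); apply: val_inj.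
Qed.

Lemma card_I4 (P : {set 'I_4}) :
  #|P| = ((inord 0 \in P) + (inord 1 \in P) + (inord 2 \in P) + (inord 3 \in P))%N.
Proof.
rewrite -sum1_card big_mkcond /= !big_ord_recl big_ord0 addn0 !addnA.
by congr (_ + _ + _ + _); congr (nat_of_bool (_ \in P)); apply: val_inj; rewrite /= inordK.
Qed.

Lemma card_setI_parties (S : {set 'I_6}) (P : {set 'I_4}) :
  #|S :&: parties party6 P| =
  ((v1 \in S) && (inord 0 \in P) + (v2 \in S) && (inord 2 \in P) + (v3 \in S) && (inord 1 \in P) +
   (v4 \in S) && (inord 0 \in P) + (v5 \in S) && (inord 3 \in P) + (v6 \in S) && (inord 1 \in P))%N.
Proof. by rewrite card_I6 !inE. Qed.

Lemma card_setD_parties (S : {set 'I_6}) (P : {set 'I_4}) :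
  #|S :\: parties party6 P| =
  ((v1 \in S) && (inord 0 \notin P) + (v2 \in S) && (inord 2 \notin P) +
   (v3 \in S) && (inord 1 \notin P) + (v4 \in S) && (inord 0 \notin P) +
   (v5 \in S) && (inord 3 \notin P) + (v6 \in S) && (inord 1 \notin P))%N.
Proof. by rewrite card_I6 !inE !(andbC (_ \in S)). Qed.

Definition party_set4 (a b c d : bool) : {set 'I_4} := [set i : 'I_4 | nth false [:: a; b; c; d] i].

Lemma mem_party_set4 i a b c d : (i < 4)%N ->
  (inord i \in party_set4 a b c d) = nth false [:: a; b; c; d] i.
Proof. by move=> lt_i4; rewrite inE inordK. Qed.

Lemma split_shape (S : {set 'I_6}) : S != set0 -> S != setT ->
  (forall P, entanglement P <= mincut S (parties party6 P) + mincut (~: S) (parties party6 P))%N ->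
  [&& (v1 \in S) != (v4 \in S), (v3 \in S) != (v6 \in S) & (v2 \in S) == (v5 \in S)].
Proof.
move=> S0 ST cut_bound.
have : (0 < #|S| < 6)%N.
  have := proper_card (_ : S \proper setT); rewrite cardsT card_ord card_gt0 S0.
  by apply; rewrite properT.
move: (cut_bound (party_set4 true false false false))
  (cut_bound (party_set4 false true false false)) (cut_bound (party_set4 false false true false))
  (cut_bound (party_set4 false false false true)) (cut_bound (party_set4 true true false false))
  (cut_bound (party_set4 true false true false)) (cut_bound (party_set4 true false false true)).
rewrite /mincut /entanglement !card_setI_parties !card_setD_parties !mem_party_set4 //.
rewrite !in_setC card_I6 /=.
move: (v1 \in S) (v2 \in S) (v3 \in S) (v4 \in S) (v5 \in S) (v6 \in S).
by do 6 case.
Qed.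

Lemma I6_cases (x : 'I_6) : x = v1 \/ x = v2 \/ x = v3 \/ x = v4 \/ x = v5 \/ x = v6.
Proof.
by case: x => [[|[|[|[|[|[|//]]]]]] ?];
  [left | right; left | do 2 right; left | do 3 right; left | do 4 right; left | do 5 right];
  apply: val_inj.
Qed.

Lemma party6_inj_on (R : {set 'I_6}) :
  (v1 \in R) != (v4 \in R) -> (v3 \in R) != (v6 \in R) -> {in R &, injective party6}.
Proof.
move=> h14 h36 x y.
case: (I6_cases x) => [->|[->|[->|[->|[->|->]]]]];
  case: (I6_cases y) => [->|[->|[->|[->|[->|->]]]]] xR yR eq_party //;
  try (by move/(congr1 val): eq_party; rewrite /= ?inordK);
  by rewrite xR yR in h14 h36.
Qed.

Lemma no_four_party_factor (R R' : {set 'I_6}) (psi : state (subQ R)) (psi' : state (subQ R')) :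
  R' = ~: R -> unit_vec psi -> unit_vec psi' ->
  v2 \in R -> v5 \in R -> (v1 \in R) != (v4 \in R) -> (v3 \in R) != (v6 \in R) ->
  ~ (forall P, purity (restr_set R (parties party6 P)) psi *
               purity (restr_set R' (parties party6 P)) psi' = (2%:R ^+ entanglement P)^-1).
Proof.
move=> defR'; subst R' => unit_psi unit_psi' in2 in5 h14 h36 purity_prod.
have inj := party6_inj_on h14 h36.
apply: (no_AME4 _ unit_psi).
  by rewrite card_subQ card_I6 in2 in5; move: h14 h36; do 4 case: (_ \in R).
move=> T cardT; pose P := [set party6 (val q) | q in T].
have restrP : restr_set R (parties party6 P) = T.
  apply/setP => q; rewrite !inE; apply/imsetP/idP => [[q' q'T /inj eq_q]|qT]; last by exists q.
  by rewrite (val_inj (eq_q (valP q) (valP q'))).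
have cardP : #|P| = 2%N.
  by rewrite card_in_imset // => q q' _ _ /(inj _ _ (valP q) (valP q'))/val_inj.
have cut_le : (mincut (~: R) (parties party6 P) + 2 <= entanglement P)%N.
  move: cardP; rewrite card_I4 /mincut card_setI_parties card_setD_parties !in_setC in2 in5.
  by rewrite /entanglement; move: h14 h36; do 4 case: (_ \in R); do 4 case: (inord _ \in P).
rewrite -restrP -[4%:R]/((2 ^ 2)%N%:R) natrX.
apply: purity_le_of_prod (unit_purity_restr_ge _ unit_psi') cut_le.
by rewrite mulrC purity_prod.
Qed.

Theorem mainTheorem14 (G : state 'I_6) :
  unit_vec G ->
  (forall (u : 'I_6) (x : basis 'I_6), apply (pstr (Kgen u)) G x = G x) ->
  ~ reducible party6 G.
Proof.
move=> unitG stabG [S [S0 [ST [psi1 [psi2 [[unit1 _] [[unit2 _] equivG]]]]]]].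
have purity_prod P : purity (restr_set S (parties party6 P)) psi1 *
    purity (restr_set (~: S) (parties party6 P)) psi2 = (2%:R ^+ entanglement P)^-1.
  by rewrite -purity_prod_state -(purity_LCU_equiv _ equivG) purity_graph_state.
have /and3P[h14 h36 /eqP h25] := split_shape S0 ST (fun P => leq_of_purity_prod
  (purity_prod P) (unit_purity_restr_ge _ unit1) (unit_purity_restr_ge _ unit2)).
have [in2|out2] := boolP (v2 \in S).
  by apply: (no_four_party_factor erefl unit1 unit2 in2 _ h14 h36 purity_prod); rewrite -h25.
have negb_neq (a b : bool) : (~~ a != ~~ b) = (a != b) by case: a; case: b.
apply: (no_four_party_factor (esym (setCK S)) unit2 unit1) => [||||P].
- by rewrite inE.
- by rewrite inE -h25.
- by rewrite !inE negb_neq.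
- by rewrite !inE negb_neq.
by rewrite mulrC purity_prod.
Qed.
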